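(* Let $A$ be a closed symmetric relation in $\mathfrak H$, let $\{\mathcal H,\Gamma_0,\Gamma_1\}$ be an AB-generalized boundary triple for $A^*$ with $A_0=\ker\Gamma_0$, Weyl function $M(\cdot)$ and $\gamma$-field $\gamma(\cdot)$. Let $A_\Theta$ be a linear relation with $A\subset A_\Theta\subset\operatorname{dom}\Gamma$ and put $\Theta=\Gamma(A_\Theta)=\{\{\Gamma_0\hat f,\Gamma_1\hat f\}:\hat f\in A_\Theta\}$. Then for every $\lambda\in\rho(A_0)$ $(A_\Theta-\lambda)^{-1}=(A_0-\lambda)^{-1}+\gamma(\lambda)(\Theta-M(\lambda))^{-1}\gamma(\bar\lambda)^*$, where all inverses, sums and products are understood in the sense of linear relations (in particular $A_\Theta$ need not be closed and $\lambda$ need not belong to $\rho(A_\Theta)$).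
   Context: Linear relations: subspaces of product spaces; inverse $T^{-1}=\{\{g,f\}:\{f,g\}\in T\}$; sum $T_1+T_2=\{\{f,g+k\}:\{f,g\}\in T_1,\{f,k\}\in T_2\}$; product $ST=\{\{f,h\}:\exists g,\{f,g\}\in T,\{g,h\}\in S\}$. An AB-generalized boundary triple for $A^*$ is a single-valued linear operator $\Gamma=\{\Gamma_0,\Gamma_1\}:\mathfrak H^2\supset\operatorname{dom}\Gamma\to\mathcal H^2$ with $\operatorname{dom}\Gamma\subset A^*$ dense in $A^*$, satisfying Green's identity $(f',g)-(f,g')=(\Gamma_1\hat f,\Gamma_0\hat g)-(\Gamma_0\hat f,\Gamma_1\hat g)$ for $\hat f=\{f,f'\},\hat g=\{g,g'\}\in\operatorname{dom}\Gamma$, with $\operatorname{ran}\Gamma_0$ dense in $\mathcal H$ and $A_0=\ker\Gamma_0$ selfadjoint. Weyl function and $\gamma$-field: $M(\lambda)\Gamma_0\hat f_\lambda=\Gamma_1\hat f_\lambda$, $\gamma(\lambda)\Gamma_0\hat f_\lambda=f_\lambda$ for $\hat f_\lambda=\{f_\lambda,\lambda f_\lambda\}\in\operatorname{dom}\Gamma$; $\gamma(\bar\lambda)^*$ is the Hilbert space adjoint (a bounded everywhere defined operator $\mathfrak H\to\mathcal H$). *)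

From Stdlib Require Import Reals.
Open Scope R_scope.

Record Cx := Cmk { Re : R ; Im : R }.
Definition C0 : Cx := Cmk 0 0.
Definition C1 : Cx := Cmk 1 0.
Definition Cadd (a b : Cx) : Cx := Cmk (Re a + Re b) (Im a + Im b).
Definition Copp (a : Cx) : Cx := Cmk (- Re a) (- Im a).
Definition Csub (a b : Cx) : Cx := Cadd a (Copp b).
Definition Cmul (a b : Cx) : Cx :=
  Cmk (Re a * Re b - Im a * Im b) (Re a * Im b + Im a * Re b).
Definition Cconj (a : Cx) : Cx := Cmk (Re a) (- Im a).

(* inner product linear in the first argument, conjugate-linear in the second *)
Record HilbertSpace := {
  carrier :> Type;
  vzero : carrier;
  vadd : carrier -> carrier -> carrier;
  vopp : carrier -> carrier;
  vscal : Cx -> carrier -> carrier;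
  inner : carrier -> carrier -> Cx;
  vadd_assoc : forall x y z, vadd x (vadd y z) = vadd (vadd x y) z;
  vadd_comm : forall x y, vadd x y = vadd y x;
  vadd_0 : forall x, vadd x vzero = x;
  vadd_opp : forall x, vadd x (vopp x) = vzero;
  vscal_1 : forall x, vscal C1 x = x;
  vscal_assoc : forall a b x, vscal a (vscal b x) = vscal (Cmul a b) x;
  vscal_distr_v : forall a x y, vscal a (vadd x y) = vadd (vscal a x) (vscal a y);
  vscal_distr_s : forall a b x, vscal (Cadd a b) x = vadd (vscal a x) (vscal b x);
  inner_add_l : forall x y z, inner (vadd x y) z = Cadd (inner x z) (inner y z);
  inner_scal_l : forall a x y, inner (vscal a x) y = Cmul a (inner x y);
  inner_conj : forall x y, inner y x = Cconj (inner x y);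
  inner_pos : forall x, 0 <= Re (inner x x);
  inner_def : forall x, Re (inner x x) = 0 -> x = vzero;
  complete : forall u : nat -> carrier,
    (forall eps, 0 < eps -> exists N, forall m n, (N <= m)%nat -> (N <= n)%nat ->
        sqrt (Re (inner (vadd (u m) (vopp (u n))) (vadd (u m) (vopp (u n))))) < eps) ->
    exists l, forall eps, 0 < eps -> exists N, forall n, (N <= n)%nat ->
        sqrt (Re (inner (vadd (u n) (vopp l)) (vadd (u n) (vopp l)))) < eps
}.

Arguments vzero {h}.
Arguments vadd {h} _ _.
Arguments vopp {h} _.
Arguments vscal {h} _ _.
Arguments inner {h} _ _.

Definition vsub {H : HilbertSpace} (x y : H) : H := vadd x (vopp y).
Definition hnorm {H : HilbertSpace} (x : H) : R := sqrt (Re (inner x x)).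

Definition rel (X Y : HilbertSpace) := X -> Y -> Prop.

Definition rel_eq {X Y : HilbertSpace} (S T : rel X Y) : Prop :=
  forall f g, S f g <-> T f g.

Definition linear_rel {X Y : HilbertSpace} (T : rel X Y) : Prop :=
  T vzero vzero /\
  (forall f g f' g', T f g -> T f' g' -> T (vadd f f') (vadd g g')) /\
  (forall a f g, T f g -> T (vscal a f) (vscal a g)).

Definition closed_rel {X Y : HilbertSpace} (T : rel X Y) : Prop :=
  forall (u : nat -> X) (v : nat -> Y) (f : X) (g : Y),
    (forall n, T (u n) (v n)) ->
    (forall eps, 0 < eps -> exists N, forall n, (N <= n)%nat ->
        hnorm (vsub (u n) f) < eps /\ hnorm (vsub (v n) g) < eps) ->
    T f g.

Definition adj {X Y : HilbertSpace} (T : rel X Y) : rel Y X :=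
  fun h k => forall f f', T f f' -> inner f' h = inner f k.

Definition symmetric_rel {X : HilbertSpace} (T : rel X X) : Prop :=
  forall f f' g g', T f f' -> T g g' -> inner f' g = inner f g'.

Definition selfadjoint_rel {X : HilbertSpace} (T : rel X X) : Prop :=
  rel_eq T (adj T).

Definition rinv {X Y : HilbertSpace} (T : rel X Y) : rel Y X :=
  fun g f => T f g.

Definition rsum {X Y : HilbertSpace} (T1 T2 : rel X Y) : rel X Y :=
  fun f h => exists g k, T1 f g /\ T2 f k /\ h = vadd g k.

Definition rsub {X Y : HilbertSpace} (T1 T2 : rel X Y) : rel X Y :=
  fun f h => exists g k, T1 f g /\ T2 f k /\ h = vsub g k.

Definition rprod {X Y Z : HilbertSpace} (S : rel Y Z) (T : rel X Y) : rel X Z :=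
  fun f h => exists g, T f g /\ S g h.

Definition rshift {X : HilbertSpace} (T : rel X X) (lam : Cx) : rel X X :=
  fun f h => exists g, T f g /\ h = vsub g (vscal lam f).

Definition resolvent_set {X : HilbertSpace} (T : rel X X) (lam : Cx) : Prop :=
  let Rl := rinv (rshift T lam) in
  (forall h, exists f, Rl h f) /\
  (forall h f1 f2, Rl h f1 -> Rl h f2 -> f1 = f2) /\
  (exists c, forall h f, Rl h f -> hnorm f <= c * hnorm h).

(* Gamma = {Gamma0, Gamma1} with domain D (a set of pairs {f,f'} in Hf^2);
   values of G0, G1 outside D are irrelevant. *)
Definition A0_of {Hf Hc : HilbertSpace} (D : rel Hf Hf) (G0 : Hf -> Hf -> Hc) : rel Hf Hf :=
  fun f f' => D f f' /\ G0 f f' = vzero.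

Definition AB_generalized_boundary_triple {Hf Hc : HilbertSpace}
  (A : rel Hf Hf) (D : rel Hf Hf) (G0 G1 : Hf -> Hf -> Hc) : Prop :=
  linear_rel D /\
  (forall f f', D f f' -> adj A f f') /\
  (forall f f', adj A f f' -> forall eps, 0 < eps ->
     exists g g', D g g' /\ hnorm (vsub f g) < eps /\ hnorm (vsub f' g') < eps) /\
  (forall f f' g g', D f f' -> D g g' ->
     G0 (vadd f g) (vadd f' g') = vadd (G0 f f') (G0 g g') /\
     G1 (vadd f g) (vadd f' g') = vadd (G1 f f') (G1 g g')) /\
  (forall a f f', D f f' ->
     G0 (vscal a f) (vscal a f') = vscal a (G0 f f') /\
     G1 (vscal a f) (vscal a f') = vscal a (G1 f f')) /\
  (forall f f' g g', D f f' -> D g g' ->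
     Csub (inner f' g) (inner f g') =
     Csub (inner (G1 f f') (G0 g g')) (inner (G0 f f') (G1 g g'))) /\
  (forall h eps, 0 < eps -> exists f f', D f f' /\ hnorm (vsub h (G0 f f')) < eps) /\
  selfadjoint_rel (A0_of D G0).

(* Weyl function (as its graph): M(lambda) Gamma0 f_lambda = Gamma1 f_lambda *)
Definition weyl {Hf Hc : HilbertSpace} (D : rel Hf Hf) (G0 G1 : Hf -> Hf -> Hc)
  (lam : Cx) : rel Hc Hc :=
  fun h k => exists f, D f (vscal lam f) /\ h = G0 f (vscal lam f) /\ k = G1 f (vscal lam f).

(* gamma-field (as its graph): gamma(lambda) Gamma0 f_lambda = f_lambda *)
Definition gamma_field {Hf Hc : HilbertSpace} (D : rel Hf Hf) (G0 : Hf -> Hf -> Hc)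
  (lam : Cx) : rel Hc Hf :=
  fun h g => exists f, D f (vscal lam f) /\ h = G0 f (vscal lam f) /\ g = f.

Definition Gamma_image {Hf Hc : HilbertSpace} (G0 G1 : Hf -> Hf -> Hc)
  (AT : rel Hf Hf) : rel Hc Hc :=
  fun h k => exists f f', AT f f' /\ h = G0 f f' /\ k = G1 f f'.

From Stdlib Require Import Reals Lra Psatz Lia Classical IndefiniteDescription.
Open Scope R_scope.

(* Given {f, h + lam f} in A_Theta, let g = (A0 - lam)^-1 h; then f - g lies in
   N_lam = ker (A^* - lam) and Green's identity gives gamma(conj lam)^* h = Gamma1 g, so
   Gamma0 (f - g) is mapped to Gamma1 g by Theta - M(lam).  Conversely, a vector assembled
   from the right-hand side differs from an element of A_Theta by a vector annihilated by
   Gamma0 and Gamma1, and ker Gamma = A, which is contained in A_Theta.  The analytic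
   input is the projection theorem: through the Riesz representation of the adjoint
   resolvent it gives ran (A0 - conj lam) = H, hence dom Gamma = A0 + N_(conj lam) and,
   ran Gamma0 being dense, a single-valued gamma(conj lam)^*; and with A closed and
   dom Gamma dense in A^* it gives ker Gamma = A. *)

Lemma Cx_ext (a b : Cx) : Re a = Re b -> Im a = Im b -> a = b.
Proof. destruct a, b; simpl; intros; subst; reflexivity. Qed.

Ltac cx := apply Cx_ext; simpl.

Definition Cm1 : Cx := Cmk (-1) 0.

Section HilbertAlgebra.
Variable H : HilbertSpace.
Implicit Types (x y z : H).

Lemma vscal_C0 x : vscal C0 x = vzero.
Proof.
  assert (E : vscal C0 x = vadd (vscal C0 x) (vscal C0 x)).
  { rewrite <- vscal_distr_s. f_equal. cx; ring. }
  assert (E2 : vadd (vscal C0 x) (vopp (vscal C0 x))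
               = vadd (vadd (vscal C0 x) (vscal C0 x)) (vopp (vscal C0 x)))
    by (rewrite <- E; reflexivity).
  rewrite vadd_opp, <- vadd_assoc, vadd_opp, vadd_0 in E2. auto.
Qed.

Lemma vopp_scal x : vopp x = vscal Cm1 x.
Proof.
  assert (E : vadd x (vscal Cm1 x) = vzero).
  { rewrite <- (vscal_1 _ x) at 1. rewrite <- vscal_distr_s.
    replace (Cadd C1 Cm1) with C0 by (cx; ring). apply vscal_C0. }
  rewrite <- (vadd_0 _ (vopp x)), <- E, vadd_assoc, (vadd_comm _ (vopp x) x), vadd_opp.
  rewrite vadd_comm, vadd_0. reflexivity.
Qed.

Lemma inner_0_l y : inner vzero y = C0.
Proof. rewrite <- (vscal_C0 vzero), inner_scal_l. cx; ring. Qed.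

Lemma inner_0_r y : inner y vzero = C0.
Proof. rewrite inner_conj, inner_0_l. cx; ring. Qed.

Lemma inner_add_r x y z : inner x (vadd y z) = Cadd (inner x y) (inner x z).
Proof.
  rewrite inner_conj, inner_add_l, (inner_conj _ y x), (inner_conj _ z x).
  destruct (inner x y), (inner x z); cx; ring.
Qed.

Lemma inner_scal_r a x y : inner x (vscal a y) = Cmul (Cconj a) (inner x y).
Proof.
  rewrite inner_conj, inner_scal_l, (inner_conj _ y x).
  destruct (inner x y), a; cx; ring.
Qed.

Lemma Re_inner_sym x y : Re (inner y x) = Re (inner x y).
Proof. rewrite inner_conj. reflexivity. Qed.

Lemma Im_inner_sym x y : Im (inner y x) = - Im (inner x y).
Proof. rewrite inner_conj. reflexivity. Qed.

Lemma Im_inner_self x : Im (inner x x) = 0.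
Proof. pose proof (Im_inner_sym x x). lra. Qed.

End HilbertAlgebra.

Arguments vscal_C0 {H}.
Arguments vopp_scal {H}.

Definition sqnorm {H : HilbertSpace} (x : H) : R := Re (inner x x).

Lemma sqnorm_ge0 {H : HilbertSpace} (x : H) : 0 <= sqnorm x.
Proof. apply inner_pos. Qed.

Lemma sqnorm_eq0 {H : HilbertSpace} (x : H) : sqnorm x = 0 -> x = vzero.
Proof. apply inner_def. Qed.

Lemma eq_of_sqnorm_sub {H : HilbertSpace} (x y : H) :
  sqnorm (vadd x (vscal Cm1 y)) = 0 -> x = y.
Proof.
  intro E. apply sqnorm_eq0 in E. rewrite <- vopp_scal in E.
  rewrite <- (vadd_0 _ x), <- (vadd_opp _ y), (vadd_comm _ y), vadd_assoc, E.
  rewrite vadd_comm, vadd_0. reflexivity.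
Qed.

(* A vector identity holds iff the squared norm of the difference vanishes;
   expanded by sesquilinearity, the latter becomes a ring identity over [R]. *)
Ltac expand :=
  unfold vsub, sqnorm; rewrite ?vopp_scal;
  repeat rewrite ?inner_add_l, ?inner_add_r, ?inner_scal_l, ?inner_scal_r,
    ?inner_0_l, ?inner_0_r.
Ltac expand_in H :=
  unfold vsub, sqnorm in H; rewrite ?vopp_scal in H;
  repeat rewrite ?inner_add_l, ?inner_add_r, ?inner_scal_l, ?inner_scal_r,
    ?inner_0_l, ?inner_0_r in H.
Ltac veq := apply eq_of_sqnorm_sub; expand; simpl; ring.

Definition rs (t : R) : Cx := Cmk t 0.

Section Norms.
Variable H : HilbertSpace.
Implicit Types (a b h u v x y : H).

Lemma vsub_eq0 a b : vsub a b = vzero -> a = b.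
Proof.
  intro E. replace a with (vadd (vsub a b) b) by veq.
  rewrite E, vadd_comm, vadd_0. reflexivity.
Qed.

Lemma vsub_eq_add h a b : h = vsub a b -> a = vadd h b.
Proof. intros ->. veq. Qed.

Lemma sqnorm_scal c x : sqnorm (vscal c x) = (Re c * Re c + Im c * Im c) * sqnorm x.
Proof. expand. pose proof (Im_inner_self _ x). destruct c; simpl in *. nra. Qed.

Lemma sqnorm_add a b : sqnorm (vadd a b) = sqnorm a + sqnorm b + 2 * Re (inner a b).
Proof. expand. simpl. rewrite (Re_inner_sym _ a b). ring. Qed.

Lemma sqnorm_sub_comm a b : sqnorm (vsub a b) = sqnorm (vsub b a).
Proof. expand. simpl. ring. Qed.

Lemma sqnorm_sub_scal x u s :
  sqnorm (vsub x (vscal (rs s) u)) = sqnorm x - 2 * s * Re (inner x u) + s * s * sqnorm u.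
Proof. expand. simpl. rewrite (Re_inner_sym _ x u). ring. Qed.

Lemma Re_inner_le a b t : 0 < t -> 2 * Re (inner a b) <= t * sqnorm a + sqnorm b / t.
Proof.
  intro Ht. pose proof (sqnorm_ge0 (vsub (vscal (rs t) a) b)) as P.
  expand_in P. unfold sqnorm. simpl in P. rewrite (Re_inner_sym _ a b) in P.
  apply Rmult_le_reg_l with t; [lra|].
  field_simplify; [nra|lra].
Qed.

Lemma sqnorm_add_le a b t :
  0 < t -> sqnorm (vadd a b) <= (1 + t) * sqnorm a + (1 + / t) * sqnorm b.
Proof.
  intro Ht. rewrite sqnorm_add. pose proof (Re_inner_le a b t Ht). unfold Rdiv in *. lra.
Qed.

Lemma parallelogram h u v :
  sqnorm (vsub u v) = 2 * sqnorm (vsub h u) + 2 * sqnorm (vsub h v)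
     - 4 * sqnorm (vsub h (vscal (rs (1/2)) (vadd u v))).
Proof. expand. simpl. field. Qed.

Lemma Im_inner_as_Re x y : Im (inner x y) = Re (inner x (vscal (Cmk 0 1) y)).
Proof. rewrite inner_scal_r. simpl. ring. Qed.

Lemma hnorm_lt x e : 0 < e -> sqnorm x < e * e -> hnorm x < e.
Proof.
  intros He Hx. unfold hnorm. rewrite <- (sqrt_Rsqr e) by lra.
  apply sqrt_lt_1_alt. split; [apply sqnorm_ge0 | exact Hx].
Qed.

Lemma sqnorm_lt_of_hnorm x e : hnorm x < sqrt e -> sqnorm x < e.
Proof. apply sqrt_lt_0_alt. Qed.

Lemma hnorm_sq x : hnorm x * hnorm x = sqnorm x.
Proof. apply sqrt_sqrt, sqnorm_ge0. Qed.

Lemma Re_inner_small w d : 0 < d -> exists eta, 0 < eta /\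
  forall x, sqnorm x < eta -> Rabs (Re (inner x w)) < d.
Proof.
  intro Hd. set (t := (sqnorm w + 1) / d).
  assert (Ht : 0 < t) by (unfold t; pose proof (sqnorm_ge0 w); apply Rdiv_lt_0_compat; lra).
  exists (d / t). split; [apply Rdiv_lt_0_compat; lra|].
  intros x Hx.
  assert (Hw : sqnorm w / t < d).
  { unfold t. pose proof (sqnorm_ge0 w). apply Rmult_lt_reg_r with ((sqnorm w + 1) / d).
    - apply Rdiv_lt_0_compat; lra.
    - field_simplify; lra. }
  assert (Hx' : t * sqnorm x < d).
  { apply Rmult_lt_compat_l with (r := t) in Hx; [|lra].
    replace (t * (d / t)) with d in Hx by (field; lra). lra. }
  pose proof (Re_inner_le x w t Ht).
  pose proof (Re_inner_le (vscal Cm1 x) w t Ht) as Hm.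
  rewrite sqnorm_scal, inner_scal_l in Hm. simpl in Hm.
  apply Rabs_def1; lra.
Qed.

Lemma inner_small w d : 0 < d -> exists eta, 0 < eta /\
  forall x, sqnorm x < eta -> Rabs (Re (inner x w)) < d /\ Rabs (Im (inner x w)) < d.
Proof.
  intro Hd. destruct (Re_inner_small w d Hd) as [e1 [He1 H1]].
  destruct (Re_inner_small (vscal (Cmk 0 1) w) d Hd) as [e2 [He2 H2]].
  exists (Rmin e1 e2). split; [apply Rmin_pos; auto|].
  intros x Hx. pose proof (Rmin_l e1 e2). pose proof (Rmin_r e1 e2).
  rewrite Im_inner_as_Re. split; [apply H1 | apply H2]; lra.
Qed.

End Norms.


Lemma zero_of_small r : 0 <= r -> (forall d, 0 < d -> r < d) -> r = 0.
Proof. intros H0 H. destruct (Req_dec r 0); auto. specialize (H r). lra. Qed.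

Lemma zero_of_Rabs_small r : (forall d, 0 < d -> Rabs r < d) -> r = 0.
Proof.
  intro H. destruct (Req_dec r 0) as [|Hr]; auto.
  specialize (H (Rabs r) (Rabs_pos_lt r Hr)). lra.
Qed.

Lemma inv_INR_small e : 0 < e -> exists N, forall n, (N <= n)%nat -> / (INR n + 1) < e.
Proof.
  intro He. destruct (archimed_cor1 e He) as [N [HN HN0]]. exists N. intros n Hn.
  apply le_INR in Hn. apply lt_INR in HN0. simpl in HN0.
  apply Rle_lt_trans with (/ INR N); [apply Rinv_le_contravar; lra | exact HN].
Qed.

Lemma glb_nonneg {T : Type} (U : T -> Prop) (F : T -> R) :
  (exists u, U u) -> (forall u, 0 <= F u) ->
  exists d, 0 <= d /\ (forall u, U u -> d <= F u) /\
    (forall e, 0 < e -> exists u, U u /\ F u < d + e).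
Proof.
  intros [u0 Hu0] F0.
  set (E := fun r => exists u, U u /\ r = - F u).
  destruct (completeness E) as [m [Hub Hlub]].
  - exists 0. intros r [u [_ ->]]. specialize (F0 u). lra.
  - exists (- F u0), u0. auto.
  - exists (- m). split; [|split].
    + assert (m <= 0) by (apply Hlub; intros r [u [_ ->]]; specialize (F0 u); lra). lra.
    + intros u Hu. assert (- F u <= m) by (apply Hub; exists u; auto). lra.
    + intros e He. apply NNPP. intro Hn.
      assert (m <= m - e); [|lra].
      apply Hlub. intros r [u [Hu ->]]. apply Rnot_lt_le. intro Hlt.
      apply Hn. exists u. split; auto. lra.
Qed.

Section Projection.
Variable H : HilbertSpace.

Definition converges (s : nat -> H) (l : H) :=
  forall e, 0 < e -> exists N, forall n, (N <= n)%nat -> sqnorm (vsub (s n) l) < e.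

Definition seq_closed (U : H -> Prop) :=
  forall s l, (forall n, U (s n)) -> converges s l -> U l.

Definition subspace (U : H -> Prop) :=
  U vzero /\ (forall x y, U x -> U y -> U (vadd x y)) /\ (forall a x, U x -> U (vscal a x)).

Lemma sqnorm_le_of_converges (h p : H) (s : nat -> H) d :
  0 <= d -> converges s p ->
  (forall e, 0 < e -> exists N, forall n, (N <= n)%nat -> sqnorm (vsub h (s n)) < d + e) ->
  sqnorm (vsub h p) <= d.
Proof.
  intros Hd Hp Hs.
  assert (Ht : forall t, 0 < t -> sqnorm (vsub h p) <= (1 + t) * d).
  { intros t Ht. apply Rle_plus_epsilon. intros eps Heps.
    assert (Hti : 0 < / t) by (apply Rinv_0_lt_compat; lra).
    destruct (Hs (eps / (2 * (1 + t)))) as [N1 HN1]; [apply Rdiv_lt_0_compat; lra|].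
    destruct (Hp (eps / (2 * (1 + / t)))) as [N2 HN2]; [apply Rdiv_lt_0_compat; lra|].
    set (n := Nat.max N1 N2).
    specialize (HN1 n (Nat.le_max_l _ _)). specialize (HN2 n (Nat.le_max_r _ _)).
    replace (vsub h p) with (vadd (vsub h (s n)) (vsub (s n) p)) by veq.
    eapply Rle_trans; [apply sqnorm_add_le, Ht|].
    apply Rmult_lt_compat_l with (r := 1 + t) in HN1; [|lra].
    apply Rmult_lt_compat_l with (r := 1 + / t) in HN2; [|lra].
    replace ((1 + t) * (d + eps / (2 * (1 + t)))) with ((1 + t) * d + eps / 2)
      in HN1 by (field; lra).
    replace ((1 + / t) * (eps / (2 * (1 + / t)))) with (eps / 2) in HN2 by (field; lra).
    lra. }
  apply Rle_plus_epsilon. intros eps Heps.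
  specialize (Ht (eps / (d + 1)) ltac:(apply Rdiv_lt_0_compat; lra)).
  assert (eps / (d + 1) * d <= eps).
  { apply Rmult_le_reg_r with (d + 1); [lra|]. field_simplify; nra. }
  nra.
Qed.

Section BestApproximation.
Variable U : H -> Prop.
Hypotheses (U_subspace : subspace U) (U_closed : seq_closed U).
Variable h : H.

Lemma best_approximation_exists :
  exists p, U p /\ forall u, U u -> sqnorm (vsub h p) <= sqnorm (vsub h u).
Proof.
  destruct U_subspace as [U0 [Uadd Uscal]].
  destruct (glb_nonneg U (fun u => sqnorm (vsub h u))) as [d [Hd0 [Hlow Happ]]].
  { exists vzero. exact U0. }
  { intro. apply sqnorm_ge0. }
  assert (Hs : forall n : nat, exists u, U u /\ sqnorm (vsub h u) < d + / (INR n + 1)).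
  { intro n. apply Happ, Rinv_0_lt_compat. pose proof (pos_INR n). lra. }
  apply functional_choice in Hs. destruct Hs as [s Hs].
  (* the midpoint of two minimizing points lies in U, so they are close *)
  assert (Hcauchy : forall n k,
    sqnorm (vsub (s n) (s k)) <= 2 * / (INR n + 1) + 2 * / (INR k + 1)).
  { intros n k. rewrite parallelogram with (h := h).
    destruct (Hs n) as [Un Hn]. destruct (Hs k) as [Uk Hk].
    pose proof (Hlow _ (Uscal (rs (1/2)) _ (Uadd _ _ Un Uk))). lra. }
  destruct (complete H s) as [p Hp].
  { intros eps Heps. destruct (inv_INR_small (eps * eps / 4)) as [N HN].
    { apply Rdiv_lt_0_compat; nra. }
    exists N. intros n k Hn Hk. apply hnorm_lt; auto.
    pose proof (HN _ Hn). pose proof (HN _ Hk). pose proof (Hcauchy n k). unfold vsub in *. lra. }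
  assert (Hconv : converges s p).
  { intros e He. destruct (Hp (sqrt e)) as [N HN]; [apply sqrt_lt_R0; auto|].
    exists N. intros n Hn. apply sqnorm_lt_of_hnorm, HN; auto. }
  exists p. split; [apply (U_closed s p); auto; intro n; apply Hs|].
  intros u Hu. apply Rle_trans with d; [|apply Hlow; auto].
  apply sqnorm_le_of_converges with s; auto.
  intros e He. destruct (inv_INR_small e He) as [N HN].
  exists N. intros n Hn. destruct (Hs n) as [_ Hn']. specialize (HN n Hn). lra.
Qed.

Lemma best_approximation_orth p :
  U p -> (forall u, U u -> sqnorm (vsub h p) <= sqnorm (vsub h u)) ->
  forall u, U u -> inner (vsub h p) u = C0.
Proof.
  intros Up Hmin.
  destruct U_subspace as [_ [Uadd Uscal]].
  set (z := vsub h p).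
  assert (Hre : forall u, U u -> Re (inner z u) = 0).
  { intros u Hu.
    assert (K : forall t, 0 <= - 2 * t * Re (inner z u) + t * t * sqnorm u).
    { intro t. pose proof (Hmin _ (Uadd _ _ Up (Uscal (rs t) _ Hu))) as D.
      replace (vsub h (vadd p (vscal (rs t) u))) with (vsub z (vscal (rs t) u)) in D
        by (unfold z; veq).
      rewrite sqnorm_sub_scal in D. fold z in D. lra. }
    set (r := Re (inner z u)) in *. set (w := sqnorm u) in *.
    assert (Hw : 0 <= w) by apply sqnorm_ge0.
    specialize (K (r / (w + 1))).
    assert (K2 : 0 <= r * r * (- 2 * (w + 1) + w)).
    { apply Rmult_le_compat_r with (r := (w + 1) * (w + 1)) in K; [|nra].
      replace ((- 2 * (r / (w + 1)) * r + r / (w + 1) * (r / (w + 1)) * w)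
                 * ((w + 1) * (w + 1)))
        with (r * r * (- 2 * (w + 1) + w)) in K by (field; lra). lra. }
    nra. }
  intros u Hu. cx.
  - apply Hre; auto.
  - rewrite Im_inner_as_Re. apply Hre, Uscal, Hu.
Qed.

End BestApproximation.

Lemma projection (U : H -> Prop) :
  subspace U -> seq_closed U ->
  forall h, exists p, U p /\ forall u, U u -> inner (vsub h p) u = C0.
Proof.
  intros Usub Ucl h.
  destruct (best_approximation_exists U Usub Ucl h) as [p [Up Hmin]].
  exists p. split; auto. apply best_approximation_orth; auto.
Qed.

End Projection.

Arguments converges {H}.
Arguments seq_closed {H}.
Arguments subspace {H}.

Section Riesz.
Variable H : HilbertSpace.
Variable phi : H -> Cx.
Hypotheses (phi_add : forall x y, phi (vadd x y) = Cadd (phi x) (phi y))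
  (phi_scal : forall a x, phi (vscal a x) = Cmul a (phi x))
  (phi_cont : forall d, 0 < d -> exists eta, 0 < eta /\
     forall x, sqnorm x < eta -> Rabs (Re (phi x)) < d /\ Rabs (Im (phi x)) < d).

Let ker_phi (u : H) := phi u = C0.

Lemma kernel_subspace : subspace ker_phi.
Proof.
  unfold ker_phi. split; [|split].
  - rewrite <- (vscal_C0 vzero), phi_scal. cx; ring.
  - intros x y Hx Hy. rewrite phi_add, Hx, Hy. cx; ring.
  - intros a x Hx. rewrite phi_scal, Hx. cx; ring.
Qed.

Lemma kernel_closed : seq_closed ker_phi.
Proof.
  intros s l Hs Hl.
  assert (E : forall n, phi l = phi (vsub l (s n))).
  { intro n. replace l with (vadd (vsub l (s n)) (s n)) at 1 by veq.
    rewrite phi_add, (Hs n). cx; ring. }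
  assert (Hsmall : forall d, 0 < d -> Rabs (Re (phi l)) < d /\ Rabs (Im (phi l)) < d).
  { intros d Hd. destruct (phi_cont d Hd) as [eta [Heta Hx]].
    destruct (Hl eta Heta) as [N HN].
    rewrite (E N). apply Hx. rewrite sqnorm_sub_comm. apply HN. lia. }
  cx; apply zero_of_Rabs_small; intros; apply Hsmall; auto.
Qed.

(* Project a vector off the kernel: the remainder [z] spans its complement. *)
Theorem riesz_representation : exists g, forall u, phi u = inner u g.
Proof.
  destruct (classic (exists u0, phi u0 <> C0)) as [[u0 Hu0] | Hnone].
  2: { exists vzero. intro u. rewrite inner_0_r. apply NNPP. intro. apply Hnone. eauto. }
  destruct (projection _ ker_phi kernel_subspace kernel_closed u0) as [p [Kp Hp]].
  unfold ker_phi in *. set (z := vsub u0 p) in *.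
  assert (Ez : phi z = phi u0).
  { unfold z. replace u0 with (vadd (vsub u0 p) p) at 2 by veq. rewrite phi_add, Kp. cx; ring. }
  assert (Hz : sqnorm z <> 0).
  { intro Hz. apply sqnorm_eq0 in Hz. apply Hu0. rewrite <- Ez, Hz.
    rewrite <- (vscal_C0 vzero), phi_scal. cx; ring. }
  set (pz := phi z) in *. set (n := sqnorm z) in *.
  exists (vscal (Cmk (Re pz / n) (- Im pz / n)) z).
  intro u.
  assert (Ku : phi (vadd (vscal pz u) (vscal Cm1 (vscal (phi u) z))) = C0).
  { rewrite phi_add, !phi_scal. fold pz. cx; ring. }
  specialize (Hp _ Ku).
  rewrite inner_add_r, !inner_scal_r in Hp.
  pose proof (f_equal Re Hp) as H1. pose proof (f_equal Im Hp) as H2.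
  rewrite inner_scal_r.
  pose proof (Im_inner_self _ z) as Hi.
  simpl in H1, H2. rewrite (Re_inner_sym _ u z), (Im_inner_sym _ u z), Hi in H1, H2.
  destruct (phi u) as [X Y]. destruct pz as [P Q]. destruct (inner u z) as [a b].
  unfold n, sqnorm in *. simpl in *.
  cx; apply Rmult_eq_reg_r with (Re (inner z z)); auto; field_simplify; auto; lra.
Qed.

End Riesz.

Lemma bounded_operator_adjoint {H : HilbertSpace} (T : H -> H) (c : R) :
  (forall x y, T (vadd x y) = vadd (T x) (T y)) ->
  (forall a x, T (vscal a x) = vscal a (T x)) ->
  (forall u, sqnorm (T u) <= c * sqnorm u) ->
  forall v, exists g, forall u, inner (T u) v = inner u g.
Proof.
  intros Tadd Tscal Tbound v.
  apply riesz_representation.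
  - intros x y. rewrite Tadd. apply inner_add_l.
  - intros a x. rewrite Tscal. apply inner_scal_l.
  - intros d Hd. destruct (inner_small _ v d Hd) as [eta [Heta Hx]].
    assert (Hc : 0 < Rabs c + 1) by (pose proof (Rabs_pos c); lra).
    exists (eta / (Rabs c + 1)). split; [apply Rdiv_lt_0_compat; lra|].
    intros x Hx'. apply Hx.
    apply Rle_lt_trans with ((Rabs c + 1) * sqnorm x).
    + pose proof (Rle_abs c). pose proof (sqnorm_ge0 x). specialize (Tbound x). nra.
    + apply Rmult_lt_compat_l with (r := Rabs c + 1) in Hx'; [|lra].
      replace ((Rabs c + 1) * (eta / (Rabs c + 1))) with eta in Hx' by (field; lra). lra.
Qed.

Definition ran {X Y : HilbertSpace} (T : rel X Y) : Y -> Prop := fun g => exists f, T f g.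

Lemma linear_rel_sub {X Y : HilbertSpace} (T : rel X Y) x x' y y' :
  linear_rel T -> T x x' -> T y y' -> T (vsub x y) (vsub x' y').
Proof. intros [_ [Tadd Tscal]] Hx Hy. unfold vsub. rewrite !vopp_scal. auto. Qed.

Lemma adj_linear {X Y : HilbertSpace} (T : rel X Y) : linear_rel (adj T).
Proof.
  split; [|split].
  - intros f f' _. rewrite !inner_0_r. reflexivity.
  - intros h k h' k' H1 H2 f f' Hf. rewrite !inner_add_r, H1, H2; auto.
  - intros a h k Hh f f' Hf. rewrite !inner_scal_r, Hh; auto.
Qed.

Lemma selfadjoint_linear {X : HilbertSpace} (T : rel X X) :
  selfadjoint_rel T -> linear_rel T.
Proof.
  intro Tsa. destruct (adj_linear T) as [T0 [Tadd Tscal]].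
  split; [|split]; intros; apply Tsa; auto; [apply Tadd | apply Tscal]; try apply Tsa; auto.
Qed.

Lemma adj_swap {X Y : HilbertSpace} (S : rel Y X) (T : rel X Y) :
  (forall f f', S f f' -> adj T f f') -> forall g g', T g g' -> adj S g g'.
Proof.
  intros HS g g' Hg f f' Hf.
  rewrite (inner_conj _ g f'), (inner_conj _ g' f), (HS _ _ Hf _ _ Hg). reflexivity.
Qed.

Lemma adj_of_dense {X Y : HilbertSpace} (S T : rel X Y) h k :
  (forall f f', T f f' -> forall eps, 0 < eps -> exists g g',
     S g g' /\ hnorm (vsub f g) < eps /\ hnorm (vsub f' g') < eps) ->
  adj S h k -> adj T h k.
Proof.
  intros Hdense Hadj f f' Hf.
  assert (Hd : forall d, 0 < d ->
    Rabs (Re (inner f' h) - Re (inner f k)) < d /\ Rabs (Im (inner f' h) - Im (inner f k)) < d).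
  { intros d Hd.
    destruct (inner_small _ h (d / 2)) as [eta1 [He1 Hs1]]; [lra|].
    destruct (inner_small _ k (d / 2)) as [eta2 [He2 Hs2]]; [lra|].
    destruct (Hdense f f' Hf (sqrt (Rmin eta1 eta2))) as [g [g' [Hg [Hn Hn']]]].
    { apply sqrt_lt_R0, Rmin_pos; auto. }
    apply sqnorm_lt_of_hnorm in Hn, Hn'.
    pose proof (Rmin_l eta1 eta2). pose proof (Rmin_r eta1 eta2).
    destruct (Hs1 (vsub f' g')) as [R1 I1]; [lra|].
    destruct (Hs2 (vsub f g)) as [R2 I2]; [lra|].
    pose proof (Hadj g g' Hg) as E.
    pose proof (f_equal Re E) as ER. pose proof (f_equal Im E) as EI.
    expand_in R1. expand_in I1. expand_in R2. expand_in I2. simpl in *.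
    apply Rabs_def2 in R1, I1, R2, I2.
    split; apply Rabs_def1; lra. }
  cx; apply Rminus_diag_uniq, zero_of_Rabs_small; intros; apply Hd; auto.
Qed.

Lemma ran_shift_subspace {X : HilbertSpace} (T : rel X X) lam :
  linear_rel T -> subspace (ran (rshift T lam)).
Proof.
  intros [T0 [Tadd Tscal]]. split; [|split].
  - exists vzero, vzero. split; auto. veq.
  - intros x y [f [g [Hf ->]]] [f' [g' [Hf' ->]]].
    exists (vadd f f'), (vadd g g'). split; auto. veq.
  - intros a x [f [g [Hf ->]]]. exists (vscal a f), (vscal a g). split; auto. veq.
Qed.

Section Resolvent.
Variables (X : HilbertSpace) (T : rel X X) (lam : Cx).
Hypotheses (T_lin : linear_rel T) (T_res : resolvent_set T lam).

Definition resolvent (h : X) : X :=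
  proj1_sig (constructive_indefinite_description _ (proj1 T_res h)).

Lemma resolvent_shift h : rshift T lam (resolvent h) h.
Proof. exact (proj2_sig (constructive_indefinite_description _ (proj1 T_res h))). Qed.

Lemma resolvent_graph h : T (resolvent h) (vadd h (vscal lam (resolvent h))).
Proof.
  destruct (resolvent_shift h) as [g [Hg Eh]]. apply vsub_eq_add in Eh. subst g. exact Hg.
Qed.

Lemma resolvent_unique h f : rshift T lam f h -> resolvent h = f.
Proof. intro Hf. exact (proj1 (proj2 T_res) h _ _ (resolvent_shift h) Hf). Qed.

Lemma shift_kernel_trivial f : T f (vscal lam f) -> f = vzero.
Proof.
  intro Hf. apply (proj1 (proj2 T_res) vzero).
  - exists (vscal lam f). split; auto. veq.
  - exists vzero. split; [apply T_lin | veq].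
Qed.

Lemma resolvent_add x y : resolvent (vadd x y) = vadd (resolvent x) (resolvent y).
Proof.
  apply resolvent_unique.
  exists (vadd (vadd x (vscal lam (resolvent x))) (vadd y (vscal lam (resolvent y)))).
  split; [apply T_lin; apply resolvent_graph | veq].
Qed.

Lemma resolvent_scal a x : resolvent (vscal a x) = vscal a (resolvent x).
Proof.
  apply resolvent_unique. exists (vscal a (vadd x (vscal lam (resolvent x)))).
  split; [apply T_lin, resolvent_graph | veq].
Qed.

Lemma resolvent_sub x y : resolvent (vsub x y) = vsub (resolvent x) (resolvent y).
Proof. unfold vsub. rewrite !vopp_scal, resolvent_add, resolvent_scal. reflexivity. Qed.

Lemma resolvent_bounded : exists c, 0 <= c /\ forall u, sqnorm (resolvent u) <= c * sqnorm u.
Proof.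
  destruct T_res as [_ [_ [c Hc]]].
  exists (c * c). split; [nra|]. intro u.
  specialize (Hc u (resolvent u) (resolvent_shift u)).
  rewrite <- !hnorm_sq. pose proof (sqrt_pos (sqnorm (resolvent u))).
  unfold hnorm, sqnorm in *. nra.
Qed.

End Resolvent.

Lemma selfadjoint_shift_conj_surj {X : HilbertSpace} (T : rel X X) lam :
  selfadjoint_rel T -> resolvent_set T lam -> forall v, ran (rshift T (Cconj lam)) v.
Proof.
  intros Tsa Tres v. pose proof (selfadjoint_linear T Tsa) as Tlin.
  destruct (resolvent_bounded X T lam Tres) as [c [_ Hc]].
  destruct (bounded_operator_adjoint (resolvent X T lam Tres) c
    (resolvent_add X T lam Tlin Tres) (resolvent_scal X T lam Tlin Tres) Hc v) as [g Hg].
  exists g, (vadd v (vscal (Cconj lam) g)). split; [|veq].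
  apply Tsa. intros x x' Hx.
  pose proof (Hg (vsub x' (vscal lam x))) as E.
  rewrite (resolvent_unique X T lam Tres _ x) in E by (exists x'; auto).
  expand_in E. expand. destruct lam as [lr li].
  pose proof (f_equal Re E) as E1. pose proof (f_equal Im E) as E2. simpl in E1, E2 |- *.
  cx; nra.
Qed.

Lemma ran_shift_closed {X : HilbertSpace} (A T : rel X X) lam :
  linear_rel A -> closed_rel A -> (forall f f', A f f' -> T f f') ->
  linear_rel T -> resolvent_set T lam -> seq_closed (ran (rshift A lam)).
Proof.
  intros Alin Acl AT Tlin Tres s l Hs Hl.
  set (Rf := resolvent X T lam Tres).
  destruct (resolvent_bounded X T lam Tres) as [c [Hc0 Hc]]. fold Rf in Hc.
  assert (Hsn : forall n, A (Rf (s n)) (vadd (s n) (vscal lam (Rf (s n))))).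
  { intro n. destruct (Hs n) as [a [a' [Ha Ea]]].
    replace (Rf (s n)) with a by (symmetry; apply resolvent_unique; exists a'; auto).
    apply vsub_eq_add in Ea. rewrite <- Ea. exact Ha. }
  exists (Rf l), (vadd l (vscal lam (Rf l))). split; [|veq].
  apply (Acl (fun n => Rf (s n)) (fun n => vadd (s n) (vscal lam (Rf (s n))))); auto.
  intros eps Heps.
  set (L := Re lam * Re lam + Im lam * Im lam).
  assert (HL : 0 <= L) by (unfold L; nra).
  set (K := 2 + 2 * L * c + c + 1).
  assert (HK : 0 < K) by (unfold K; nra).
  destruct (Hl (eps * eps / K)) as [N HN]; [apply Rdiv_lt_0_compat; nra|].
  exists N. intros n Hn. specialize (HN n Hn).
  apply Rmult_lt_compat_l with (r := K) in HN; [|lra].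
  replace (K * (eps * eps / K)) with (eps * eps) in HN by (field; lra).
  pose proof (sqnorm_ge0 (vsub (s n) l)).
  assert (HR : sqnorm (vsub (Rf (s n)) (Rf l)) <= c * sqnorm (vsub (s n) l)).
  { unfold Rf. rewrite <- resolvent_sub by auto. apply Hc. }
  split; apply hnorm_lt; auto.
  - unfold K in HN. nra.
  - replace (vsub (vadd (s n) (vscal lam (Rf (s n)))) (vadd l (vscal lam (Rf l))))
      with (vadd (vsub (s n) l) (vscal lam (vsub (Rf (s n)) (Rf l)))) by veq.
    eapply Rle_lt_trans; [apply sqnorm_add_le with (t := 1); lra|].
    rewrite sqnorm_scal, Rinv_1. fold L.
    assert (L * sqnorm (vsub (Rf (s n)) (Rf l)) <= L * (c * sqnorm (vsub (s n) l))) by nra.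
    unfold K in HN. nra.
Qed.

Lemma orth_dense_zero {H : HilbertSpace} (S : H -> Prop) w :
  (forall h eps, 0 < eps -> exists s, S s /\ hnorm (vsub h s) < eps) ->
  (forall s, S s -> inner s w = C0) -> w = vzero.
Proof.
  intros Sdense Sorth. apply sqnorm_eq0, zero_of_small; [apply sqnorm_ge0|].
  intros d Hd. destruct (Sdense w (sqrt d) (sqrt_lt_R0 _ Hd)) as [s [Ss Hs]].
  apply sqnorm_lt_of_hnorm in Hs. eapply Rle_lt_trans; [|exact Hs].
  pose proof (f_equal Re (Sorth s Ss)) as E. pose proof (sqnorm_ge0 s).
  expand. simpl in *. rewrite (Re_inner_sym _ s w). unfold sqnorm in *. lra.
Qed.

Section BoundaryTriple.
Variables (Hf Hc : HilbertSpace) (A D : rel Hf Hf) (G0 G1 : Hf -> Hf -> Hc) (lam : Cx).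
Hypotheses (A_lin : linear_rel A) (A_closed : closed_rel A)
  (BT : AB_generalized_boundary_triple A D G0 G1)
  (lam_res : resolvent_set (A0_of D G0) lam).

Local Notation A0 := (A0_of D G0).
Local Notation gam := (gamma_field D G0).

Lemma dom_lin : linear_rel D.
Proof. apply BT. Qed.

Lemma Gamma_sub x x' y y' : D x x' -> D y y' ->
  G0 (vsub x y) (vsub x' y') = vsub (G0 x x') (G0 y y') /\
  G1 (vsub x y) (vsub x' y') = vsub (G1 x x') (G1 y y').
Proof.
  destruct BT as [[_ [_ Dscal]] [_ [_ [Glin [Gscal _]]]]]. intros Dx Dy.
  unfold vsub. rewrite !vopp_scal.
  rewrite (proj1 (Glin _ _ _ _ Dx (Dscal Cm1 _ _ Dy))), (proj2 (Glin _ _ _ _ Dx (Dscal Cm1 _ _ Dy))).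
  rewrite (proj1 (Gscal _ _ _ Dy)), (proj2 (Gscal _ _ _ Dy)). auto.
Qed.

Lemma A0_selfadjoint : selfadjoint_rel A0.
Proof. apply BT. Qed.

Lemma A0_lin : linear_rel A0.
Proof. apply selfadjoint_linear, A0_selfadjoint. Qed.

Lemma A_sub_A0 f f' : A f f' -> A0 f f'.
Proof.
  intro Af. apply A0_selfadjoint. revert Af. apply adj_swap.
  intros x x' [Dx _]. apply BT, Dx.
Qed.

Lemma defect_G0_inj x y : D x (vscal lam x) -> D y (vscal lam y) ->
  G0 x (vscal lam x) = G0 y (vscal lam y) -> x = y.
Proof.
  intros Dx Dy E. apply vsub_eq0, (shift_kernel_trivial _ A0 lam A0_lin lam_res).
  replace (vscal lam (vsub x y)) with (vsub (vscal lam x) (vscal lam y)) by veq.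
  split; [apply linear_rel_sub; auto; apply dom_lin|].
  rewrite (proj1 (Gamma_sub _ _ _ _ Dx Dy)), E. veq.
Qed.

(* dom Gamma = A0 + N_(conj lam), since ran (A0 - conj lam) is everything *)
Lemma dom_decomposition x x' : D x x' ->
  exists y, D y (vscal (Cconj lam) y) /\ G0 y (vscal (Cconj lam) y) = G0 x x'.
Proof.
  intro Dx.
  destruct (selfadjoint_shift_conj_surj A0 lam A0_selfadjoint lam_res
    (vsub x' (vscal (Cconj lam) x))) as [y [y' [[Dy G0y] Ey]]].
  exists (vsub x y).
  replace (vscal (Cconj lam) (vsub x y)) with (vsub x' y').
  - split; [apply linear_rel_sub; auto; apply dom_lin|].
    rewrite (proj1 (Gamma_sub _ _ _ _ Dx Dy)), G0y. veq.
  - replace x' with (vadd (vsub x' (vscal (Cconj lam) x)) (vscal (Cconj lam) x)) by veq.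
    rewrite Ey. veq.
Qed.

Lemma gamma_adj_A0 g g' : A0 g g' ->
  adj (gam (Cconj lam)) (vsub g' (vscal lam g)) (G1 g g').
Proof.
  intros [Dg G0g] c y [x [Dx [-> ->]]].
  destruct BT as [_ [_ [_ [_ [_ [Green _]]]]]].
  pose proof (Green _ _ _ _ Dx Dg) as G. rewrite G0g, inner_0_r in G.
  expand_in G. expand. destruct lam as [lr li].
  pose proof (f_equal Re G) as G1'. pose proof (f_equal Im G) as G2'. simpl in G1', G2' |- *.
  cx; nra.
Qed.

Lemma gamma_adj_functional h k1 k2 :
  adj (gam (Cconj lam)) h k1 -> adj (gam (Cconj lam)) h k2 -> k1 = k2.
Proof.
  intros H1 H2. apply vsub_eq0, (orth_dense_zero (fun c => exists x x', D x x' /\ c = G0 x x')).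
  - intros c eps Heps. destruct BT as [_ [_ [_ [_ [_ [_ [Hdense _]]]]]]].
    destruct (Hdense c eps Heps) as [x [x' [Dx Hx]]]. exists (G0 x x'). split; eauto.
  - intros c [x [x' [Dx ->]]]. destruct (dom_decomposition x x' Dx) as [y [Dy <-]].
    assert (Hy : gam (Cconj lam) (G0 y (vscal (Cconj lam) y)) y) by (exists y; auto).
    pose proof (H1 _ _ Hy) as E1. rewrite (H2 _ _ Hy) in E1.
    expand. rewrite <- E1. cx; ring.
Qed.

(* [e] annihilates the boundary form, so it lies in the closure of [A]; the defect of
   [e] relative to [A] is then orthogonal to ran (A - lam), which forces it into
   ker (A0 - lam) = 0. *)
Lemma ker_Gamma_sub_A e e' : D e e' -> G0 e e' = vzero -> G1 e e' = vzero -> A e e'.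
Proof.
  intros De G0e G1e.
  destruct BT as [_ [_ [D_dense [_ [_ [Green _]]]]]].
  assert (He : adj (adj A) e e').
  { apply adj_of_dense with (S := D); auto.
    intros x x' Dx. pose proof (Green _ _ _ _ Dx De) as G. rewrite G0e, G1e, !inner_0_r in G.
    pose proof (f_equal Re G). pose proof (f_equal Im G). simpl in *. cx; lra. }
  destruct (projection _ _ (ran_shift_subspace A lam A_lin)
    (ran_shift_closed A A0 lam A_lin A_closed A_sub_A0 A0_lin lam_res)
    (vsub e' (vscal lam e))) as [p [[a [a' [Ha ->]]] Horth]].
  set (e2 := vsub e a). set (e2' := vsub e' a').
  assert (He2 : adj (adj A) e2 e2').
  { apply linear_rel_sub; auto; [apply adj_linear|]. revert Ha. apply adj_swap. auto. }
  set (z := vsub e2' (vscal lam e2)).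
  assert (Hz : adj A z (vscal (Cconj lam) z)).
  { intros b b' Hb.
    specialize (Horth (vsub b' (vscal lam b)) (ex_intro _ b (ex_intro _ b' (conj Hb eq_refl)))).
    replace (vsub (vsub e' (vscal lam e)) (vsub a' (vscal lam a))) with z in Horth
      by (unfold z, e2, e2'; veq).
    rewrite inner_conj in Horth. expand_in Horth. expand. destruct lam as [lr li].
    pose proof (f_equal Re Horth) as H1. pose proof (f_equal Im Horth) as H2.
    simpl in H1, H2 |- *. cx; nra. }
  assert (Ez : z = vzero).
  { apply sqnorm_eq0. pose proof (f_equal Re (He2 _ _ Hz)) as E.
    change (Re (inner z (vsub e2' (vscal lam e2))) = 0).
    expand_in E. expand. destruct lam as [lr li]. simpl in E |- *. nra. }
  assert (E2 : e2 = vzero).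
  { apply (shift_kernel_trivial _ A0 lam A0_lin lam_res).
    replace (vscal lam e2) with e2' by (apply vsub_eq0, Ez).
    apply linear_rel_sub; [apply A0_lin | split; auto | apply A_sub_A0; auto]. }
  assert (E2' : e2' = vzero).
  { replace e2' with (vadd z (vscal lam e2)) by (unfold z; veq). rewrite Ez, E2. veq. }
  apply vsub_eq0 in E2, E2'. rewrite E2, E2'. exact Ha.
Qed.

Lemma shift_diff_defect f f' g g' : D f f' -> A0 g g' ->
  vsub f' (vscal lam f) = vsub g' (vscal lam g) ->
  D (vsub f g) (vscal lam (vsub f g)) /\
  G0 (vsub f g) (vscal lam (vsub f g)) = G0 f f' /\
  G1 (vsub f g) (vscal lam (vsub f g)) = vsub (G1 f f') (G1 g g').
Proof.
  intros Df [Dg G0g] E.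
  replace (vscal lam (vsub f g)) with (vsub f' g').
  - destruct (Gamma_sub _ _ _ _ Df Dg) as [-> ->]. rewrite G0g.
    split; [apply linear_rel_sub; auto; apply dom_lin | split; [veq | auto]].
  - replace f' with (vadd (vsub f' (vscal lam f)) (vscal lam f)) by veq. rewrite E. veq.
Qed.

Section Krein.
Variable AT : rel Hf Hf.
Hypotheses (AT_lin : linear_rel AT) (A_sub_AT : forall f f', A f f' -> AT f f')
  (AT_sub_D : forall f f', AT f f' -> D f f').

Local Notation Theta := (Gamma_image G0 G1 AT).
Local Notation M := (weyl D G0 G1).

Lemma krein_resolvent_sub h f : rinv (rshift AT lam) h f ->
  rsum (rinv (rshift A0 lam))
    (rprod (gam lam) (rprod (rinv (rsub Theta (M lam))) (adj (gam (Cconj lam))))) h f.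
Proof.
  intros [f' [ATf Eh]].
  set (g := resolvent Hf A0 lam lam_res h).
  pose proof (resolvent_graph Hf A0 lam lam_res h) as A0g. fold g in A0g.
  destruct (shift_diff_defect f f' g (vadd h (vscal lam g)) (AT_sub_D _ _ ATf) A0g)
    as [Dk [G0k G1k]]; [rewrite <- Eh; veq|].
  exists g, (vsub f g). split; [apply resolvent_shift | split; [|veq]].
  exists (G0 (vsub f g) (vscal lam (vsub f g))). split; [|exists (vsub f g); auto].
  exists (G1 g (vadd h (vscal lam g))). split.
  - replace h with (vsub (vadd h (vscal lam g)) (vscal lam g)) at 1 by veq.
    apply gamma_adj_A0, A0g.
  - exists (G1 f f'), (G1 (vsub f g) (vscal lam (vsub f g))). split; [|split].
    + exists f, f'. auto.
    + exists (vsub f g). auto.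
    + rewrite G1k. veq.
Qed.

Lemma krein_resolvent_sup h f :
  rsum (rinv (rshift A0 lam))
    (rprod (gam lam) (rprod (rinv (rsub Theta (M lam))) (adj (gam (Cconj lam))))) h f ->
  rinv (rshift AT lam) h f.
Proof.
  intros [g [k [[g' [A0g Eh]] [[c [[cc [Hadj Hrsub]] [f3 [Df3 [Ec3 ->]]]]] ->]]]].
  destruct Hrsub as [a [b [[f1 [f1' [ATf1 [Ec1 ->]]]] [[f2 [Df2 [Ec2 ->]]] Ecc]]]].
  assert (Hcc : cc = G1 g g').
  { apply (gamma_adj_functional h); auto. rewrite Eh. apply gamma_adj_A0, A0g. }
  assert (f2 = f3) as <- by (apply defect_G0_inj; auto; rewrite <- Ec2, <- Ec3; auto).
  destruct A0g as [Dg G0g].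
  set (e := vsub (vsub f1 f2) g). set (e' := vsub (vsub f1' (vscal lam f2)) g').
  assert (Df12 : D (vsub f1 f2) (vsub f1' (vscal lam f2)))
    by (apply linear_rel_sub; auto; apply dom_lin).
  assert (Ae : A e e').
  { destruct (Gamma_sub _ _ _ _ Df12 Dg) as [E0 E1].
    destruct (Gamma_sub _ _ _ _ (AT_sub_D _ _ ATf1) Df2) as [E0' E1'].
    apply ker_Gamma_sub_A; unfold e, e'.
    - apply linear_rel_sub; auto; apply dom_lin.
    - rewrite E0, E0', <- Ec1, <- Ec2, G0g. veq.
    - rewrite E1, E1', <- Ecc, Hcc. veq. }
  exists (vsub f1' e'). split.
  - replace (vadd g f2) with (vsub f1 e) by (unfold e; veq).
    apply linear_rel_sub; auto.
  - rewrite Eh. unfold e'. veq.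
Qed.

End Krein.

End BoundaryTriple.

Theorem mainTheorem7 (Hf Hc : HilbertSpace) (A : rel Hf Hf) (D : rel Hf Hf)
  (G0 G1 : Hf -> Hf -> Hc) (AT : rel Hf Hf) (lam : Cx) :
  linear_rel A -> closed_rel A -> symmetric_rel A ->
  AB_generalized_boundary_triple A D G0 G1 ->
  linear_rel AT ->
  (forall f f', A f f' -> AT f f') ->
  (forall f f', AT f f' -> D f f') ->
  resolvent_set (A0_of D G0) lam ->
  rel_eq (rinv (rshift AT lam))
    (rsum (rinv (rshift (A0_of D G0) lam))
          (rprod (gamma_field D G0 lam)
                 (rprod (rinv (rsub (Gamma_image G0 G1 AT) (weyl D G0 G1 lam)))
                        (adj (gamma_field D G0 (Cconj lam)))))).
Proof.
  intros A_lin A_closed _ BT AT_lin A_sub_AT AT_sub_D lam_res h f. split.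
  - apply (krein_resolvent_sub _ _ A D G0 G1 lam); auto.
  - apply (krein_resolvent_sup _ _ A D G0 G1 lam); auto.
Qed.
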